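(* For every connected access structure $\mathcal{A}\subseteq 2^P$, $\kappa(\mathcal{A})=\kappa(\mathcal{A}^\perp)$, where $\kappa(\mathcal{A})=\inf\{\sigma(\mathcal M):\mathcal M\text{ is a polymatroid realizing }\mathcal{A}\}$.
   Context: A polymatroid $(f,M)$ consists of a finite set $M$ and a function $f$ on subsets of $M$ with $f(\emptyset)=0$ that is non-negative, monotone and submodular. An access structure on a finite set $P$ is a non-empty upward-closed $\mathcal{A}\subseteq 2^P$ with $\emptyset\notin\mathcal{A}$; its dual is $\mathcal{A}^\perp=\{A\subseteq P: P\setminus A\notin\mathcal{A}\}$. A participant $i$ is important if some $A\notin\mathcal{A}$ has $A\cup\{i\}\in\mathcal{A}$; $\mathcal{A}$ is connected if every participant is important. Let $s\notin P$; juxtaposition denotes union. A polymatroid $(f,sP)$ realizes $\mathcal{A}$ if for every $A\subseteq P$: $A\in\mathcal{A}$ iff $f(sA)=f(A)$, and $A\notin\mathcal{A}$ iff $f(sA)=f(A)+f(s)$. The complexity of a realizing polymatroid is $\sigma(\mathcal M)=\max_{i\in P}f(i)/f(s)$. *)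

From mathcomp Require Import all_boot.
From Stdlib Require Import Reals.
Set Implicit Arguments. Unset Strict Implicit. Unset Printing Implicit Defensive.

Open Scope R_scope.

(* Ground set sP is modelled as [option P]: [None] is the dealer s, [Some i] is participant i. *)

Definition polymatroid (M : finType) (f : {set M} -> R) : Prop :=
  f set0 = 0 /\
  (forall X, 0 <= f X) /\
  (forall X Y : {set M}, X \subset Y -> f X <= f Y) /\
  (forall X Y : {set M}, f (X :|: Y) + f (X :&: Y) <= f X + f Y).

Definition access_structure (P : finType) (A : {set {set P}}) : Prop :=
  A != set0 /\
  (forall X Y : {set P}, X \in A -> X \subset Y -> Y \in A) /\
  set0 \notin A.

Definition dual_as (P : finType) (A : {set {set P}}) : {set {set P}} :=
  [set X : {set P} | ~: X \notin A].

Definition important (P : finType) (A : {set {set P}}) (i : P) : Prop :=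
  exists X : {set P}, X \notin A /\ i |: X \in A.

Definition connected_as (P : finType) (A : {set {set P}}) : Prop :=
  forall i : P, important A i.

Definition emb (P : finType) (X : {set P}) : {set option P} := Some @: X.
Definition dealer (P : finType) : {set option P} := [set None].

Definition realizes (P : finType) (f : {set option P} -> R) (A : {set {set P}}) : Prop :=
  forall X : {set P},
    (X \in A <-> f (dealer P :|: emb X) = f (emb X)) /\
    (X \notin A <-> f (dealer P :|: emb X) = f (emb X) + f (dealer P)).

(* sigma(M) = max_{i in P} f(i)/f(s) (values are nonnegative, so 0 is a neutral start). *)
Definition complexity (P : finType) (f : {set option P} -> R) : R :=
  \big[Rmax/0]_(i : P) (f [set Some i] / f (dealer P)).

Definition complexities (P : finType) (A : {set {set P}}) (x : R) : Prop :=
  exists f : {set option P} -> R,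
    polymatroid f /\ realizes f A /\ x = complexity f.

Definition is_inf (S : R -> Prop) (k : R) : Prop :=
  (forall x, S x -> k <= x) /\
  (forall m, (forall x, S x -> m <= x) -> m <= k).

From HB Require Import structures.
From mathcomp Require Import all_boot zify.
From Stdlib Require Import Reals Lra Lia.

Set Implicit Arguments.
Unset Strict Implicit.
Unset Printing Implicit Defensive.

(* Every access structure A is realized by some polymatroid (a sum of truncated
   uniform matroid ranks, one per qualified set, plus the indicator of "the
   dealer is present or the participants are qualified"), so both infima exist.
   If f realizes A on sP, its dual f*(X) = f(sP \ X) + sum_(x in X) f(x) - f(sP)
   is a polymatroid realizing the dual structure, with f*(s) = f(s) (because P is
   qualified) and f*(i) <= f(i); hence kappa(A^perp) <= kappa(A), and equality
   follows from A^perp^perp = A. *)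

Lemma RplusA : associative Rplus. Proof. by move=> x y z; lra. Qed.
Lemma RplusC : commutative Rplus. Proof. by move=> x y; lra. Qed.
Lemma Rplus0l : left_id 0 Rplus. Proof. by move=> x; lra. Qed.
HB.instance Definition _ := Monoid.isComLaw.Build R 0 Rplus RplusA RplusC Rplus0l.

Section Polymatroid.
Variables (M : finType) (f : {set M} -> R).
Hypothesis f_pm : polymatroid f.
Implicit Types X Y Z W : {set M}.

Lemma pm_ge0 X : 0 <= f X. Proof. by case: f_pm => _ [ge0 _]; apply: ge0. Qed.
Lemma pm_mono X Y : X \subset Y -> f X <= f Y.
Proof. by case: f_pm => _ [_ [mono _]]; apply: mono. Qed.
Lemma pm_submod X Y : f (X :|: Y) + f (X :&: Y) <= f X + f Y.
Proof. by case: f_pm => _ [_ [_ submod]]; apply: submod. Qed.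

Definition singleton_sum X : R := \big[Rplus/0]_(x in X) f [set x].

Lemma singleton_sum0 : singleton_sum set0 = 0.
Proof. by rewrite /singleton_sum big_set0. Qed.

Lemma singleton_sum1 x : singleton_sum [set x] = f [set x].
Proof. by rewrite /singleton_sum big_set1. Qed.

Lemma singleton_sumUI X Y :
  singleton_sum (X :|: Y) + singleton_sum (X :&: Y) = singleton_sum X + singleton_sum Y.
Proof.
rewrite /singleton_sum !(big_mkcond (fun x => x \in _)) -!big_split /=.
by apply: eq_bigr => x _; rewrite !inE; case: (x \in X); case: (x \in Y) => /=; lra.
Qed.

Lemma singleton_sumD X Y : X \subset Y ->
  singleton_sum Y = singleton_sum X + singleton_sum (Y :\: X).
Proof.
move=> sXY; have := singleton_sumUI X (Y :\: X).
have -> : X :|: (Y :\: X) = Y by rewrite -{2}(setID Y X) (setIidPr sXY).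
have -> : X :&: (Y :\: X) = set0 by rewrite setDE setICA setICr setI0.
by rewrite singleton_sum0; lra.
Qed.

Lemma pm_le_singleton_sum Z W : f (Z :|: W) <= f Z + singleton_sum W.
Proof.
move: {2}#|W| (erefl #|W|) => n; elim: n Z W => [|n IH] Z W cardW.
  by move/cards0_eq: cardW => ->; rewrite setU0 singleton_sum0; lra.
have /set0Pn [x Wx] : W != set0 by rewrite -card_gt0 cardW.
have cardWx : #|W :\ x| = n by move: cardW; rewrite (cardsD1 x W) Wx; case.
have sumW : singleton_sum W = f [set x] + singleton_sum (W :\ x).
  by rewrite /singleton_sum (big_setD1 x Wx).
have -> : Z :|: W = (Z :|: (W :\ x)) :|: [set x].
  by rewrite -setUA [(W :\ x) :|: _]setUC setD1K.
have := IH Z _ cardWx; have := pm_submod (Z :|: (W :\ x)) [set x].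
have := pm_ge0 ((Z :|: (W :\ x)) :&: [set x]); lra.
Qed.

Definition dual_pm Y : R := f (~: Y) + singleton_sum Y - f setT.

Lemma dual_pm_mono X Y : X \subset Y -> dual_pm X <= dual_pm Y.
Proof.
move=> sXY; rewrite /dual_pm (singleton_sumD sXY).
have -> : ~: X = ~: Y :|: (Y :\: X).
  apply/setP => x; rewrite !inE.
  by case: (boolP (x \in X)) => [/(subsetP sXY) -> | _] //; case: (x \in Y).
have := pm_le_singleton_sum (~: Y) (Y :\: X); lra.
Qed.

Lemma dual_pm_polymatroid : polymatroid dual_pm.
Proof.
have dual0 : dual_pm set0 = 0 by rewrite /dual_pm setC0 singleton_sum0; lra.
split; [exact: dual0 | split; [| split]].
- by move=> X; rewrite -dual0; apply: dual_pm_mono; apply: sub0set.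
- exact: dual_pm_mono.
- move=> X Y; rewrite /dual_pm setCU setCI.
  have := pm_submod (~: X) (~: Y); have := singleton_sumUI X Y; lra.
Qed.

Lemma dual_pm1 x : dual_pm [set x] <= f [set x].
Proof.
rewrite /dual_pm singleton_sum1; have := pm_mono (subsetT (~: [set x])); lra.
Qed.

End Polymatroid.

Section SharingSets.
Variable P : finType.
Implicit Types (X : {set P}) (Y Z : {set option P}).

Lemma mem_emb i X : (Some i \in emb X) = (i \in X).
Proof. by rewrite /emb mem_imset // => a b []. Qed.

Lemma None_notin_emb X : None \notin emb X.
Proof. by apply/imsetP => -[]. Qed.

Ltac option_setP :=
  apply/setP => -[i|]; rewrite !inE ?mem_emb ?(negbTE (None_notin_emb _)) ?inE.

Lemma setC_dealerU_emb X : ~: (dealer P :|: emb X) = emb (~: X).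
Proof. by option_setP. Qed.

Lemma setC_emb X : ~: emb X = dealer P :|: emb (~: X).
Proof. by option_setP. Qed.

Lemma dealerI_emb X : dealer P :&: emb X = set0.
Proof. by option_setP. Qed.

Lemma dealerU_embT : dealer P :|: emb setT = setT.
Proof. by option_setP. Qed.

Lemma dealerU_emb0 : dealer P :|: emb set0 = dealer P.
Proof. by option_setP. Qed.

Definition part (Y : {set option P}) : {set P} := [set i | Some i \in Y].

Lemma partU Y Z : part (Y :|: Z) = part Y :|: part Z.
Proof. by apply/setP => i; rewrite !inE. Qed.

Lemma partI Y Z : part (Y :&: Z) = part Y :&: part Z.
Proof. by apply/setP => i; rewrite !inE. Qed.

Lemma partS Y Z : Y \subset Z -> part Y \subset part Z.
Proof. by move=> sYZ; apply/subsetP => i; rewrite !inE; apply: (subsetP sYZ). Qed.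

Lemma part_emb X : part (emb X) = X.
Proof. by apply/setP => i; rewrite inE mem_emb. Qed.

Lemma part_dealerU_emb X : part (dealer P :|: emb X) = X.
Proof. by apply/setP => i; rewrite !inE mem_emb. Qed.

Lemma part0 : part set0 = set0.
Proof. by apply/setP => i; rewrite !inE. Qed.

Lemma part_dealer : part (dealer P) = set0.
Proof. by apply/setP => i; rewrite !inE. Qed.

End SharingSets.

Lemma setT_in_access (P : finType) (A : {set {set P}}) : access_structure A -> setT \in A.
Proof. by case=> /set0Pn [X AX] [up _]; apply: up AX (subsetT X). Qed.

Lemma dual_access (P : finType) (A : {set {set P}}) :
  access_structure A -> access_structure (dual_as A).
Proof.
move=> accA; have [_ [up A0]] := accA; split; [|split].
- by apply/set0Pn; exists setT; rewrite inE setCT.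
- move=> X Y; rewrite !inE => nAX sXY; apply: contra nAX => AY.
  by apply: up AY _; rewrite setCS.
- by rewrite inE setC0 negbK setT_in_access.
Qed.

Lemma dual_asK (P : finType) (A : {set {set P}}) : dual_as (dual_as A) = A.
Proof. by apply/setP => X; rewrite !inE setCK negbK. Qed.

Lemma complexity_ge0 (P : finType) (f : {set option P} -> R) : 0 <= complexity f.
Proof.
rewrite /complexity; apply: (big_rec (fun x => 0 <= x)) => [|i y _ y_ge0]; first lra.
exact: Rle_trans y_ge0 (Rmax_r _ _).
Qed.

Lemma complexities_ge0 (P : finType) (A : {set {set P}}) x : complexities A x -> 0 <= x.
Proof. by move=> [f [_ [_ ->]]]; apply: complexity_ge0. Qed.

Lemma complexity_le (P : finType) (f g : {set option P} -> R) :
  0 < f (dealer P) -> g (dealer P) = f (dealer P) ->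
  (forall i, g [set Some i] <= f [set Some i]) -> complexity g <= complexity f.
Proof.
move=> s_gt0 gs gf; rewrite /complexity gs.
apply: (big_ind2 (fun x y => x <= y)) => [|x1 x2 y1 y2 le1 le2|i _]; first lra.
  exact: Rle_trans (Rle_max_compat_r _ _ _ le1) (Rle_max_compat_l _ _ _ le2).
by apply: Rmult_le_compat_r (gf i); apply/Rlt_le/Rinv_0_lt_compat.
Qed.

Section DualRealization.
Variables (P : finType) (A : {set {set P}}) (f : {set option P} -> R).
Hypotheses (accA : access_structure A) (f_pm : polymatroid f) (f_realizes : realizes f A).

Lemma realizes_qualified X : X \in A -> f (dealer P :|: emb X) = f (emb X).
Proof. exact: (proj1 (proj1 (f_realizes X))). Qed.

Lemma realizes_unqualified X :
  X \notin A <-> f (dealer P :|: emb X) = f (emb X) + f (dealer P).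
Proof. exact: (proj2 (f_realizes X)). Qed.

Lemma realizes_dealer_gt0 : 0 < f (dealer P).
Proof.
have /Rle_lt_or_eq_dec [//|s0] := pm_ge0 f_pm (dealer P).
have AT := setT_in_access accA.
suff : setT \notin A by rewrite AT.
by apply/realizes_unqualified; rewrite -s0 Rplus_0_r realizes_qualified.
Qed.

Lemma singleton_sum_dealer : singleton_sum f (dealer P) = f (dealer P).
Proof. exact: singleton_sum1. Qed.

Lemma dual_pm_dealer : dual_pm f (dealer P) = f (dealer P).
Proof.
have fT : f setT = f (emb setT).
  by rewrite -dealerU_embT realizes_qualified ?setT_in_access.
rewrite /dual_pm -{1}dealerU_emb0 setC_dealerU_emb setC0 fT.
rewrite singleton_sum_dealer; lra.
Qed.

Lemma dual_pm_realizes : realizes (dual_pm f) (dual_as A).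
Proof.
move=> X; have [[qual1 qual2] [unqual1 unqual2]] := f_realizes (~: X).
have sum_dealerU : singleton_sum f (dealer P :|: emb X)
                   = f (dealer P) + singleton_sum f (emb X).
  have := singleton_sumUI f (dealer P) (emb X).
  by rewrite dealerI_emb singleton_sum0 singleton_sum_dealer; lra.
rewrite dual_pm_dealer /dual_pm setC_dealerU_emb setC_emb sum_dealerU inE negbK.
split; split=> H.
- by have := unqual1 H; lra.
- by apply: unqual2; lra.
- by have := qual1 H; lra.
- by apply: qual2; lra.
Qed.

Lemma complexity_dual_pm : complexity (dual_pm f) <= complexity f.
Proof.
apply: complexity_le realizes_dealer_gt0 dual_pm_dealer _ => i.
exact: dual_pm1.
Qed.

End DualRealization.

Section CanonicalRealization.
Variables (P : finType) (A : {set {set P}}).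
Hypothesis accA : access_structure A.
Local Open Scope nat_scope.
Implicit Types p q B : {set P}.

Lemma access_up p q : p \in A -> p \subset q -> q \in A.
Proof. by case: accA => _ [up _]; apply: up. Qed.

(* Rank of p :&: B in the uniform matroid of rank |B| - 1 on B. *)
Definition trunc_rank B p : nat := minn #|p :&: B| #|B|.-1.

Definition rank_sum p : nat := \sum_(B in A) trunc_rank B p.

Lemma trunc_rank_submod B p q :
  trunc_rank B (p :|: q) + trunc_rank B (p :&: q) <= trunc_rank B p + trunc_rank B q.
Proof.
rewrite /trunc_rank setIUl.
have -> : p :&: q :&: B = (p :&: B) :&: (q :&: B) by rewrite setIACA setIid.
have := cardsUI (p :&: B) (q :&: B).
have := subset_leq_card (subsetIl (p :&: B) (q :&: B)).
have := subset_leq_card (subsetIr (p :&: B) (q :&: B)); lia.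
Qed.

Lemma rank_sum_submod p q :
  rank_sum (p :|: q) + rank_sum (p :&: q) <= rank_sum p + rank_sum q.
Proof. by rewrite /rank_sum -!big_split; apply: leq_sum => B _; apply: trunc_rank_submod. Qed.

Lemma trunc_rank_submod_strict p q : ~~ (q \subset p) -> ~~ (p \subset q) ->
  trunc_rank (p :|: q) (p :|: q) + trunc_rank (p :|: q) (p :&: q)
  < trunc_rank (p :|: q) p + trunc_rank (p :|: q) q.
Proof.
move=> nsqp nspq; rewrite /trunc_rank setIid.
rewrite (setIidPl (subsetUl p q)) (setIidPl (subsetUr p q)).
rewrite (setIidPl (subset_trans (subsetIl p q) (subsetUl p q))).
have := cardsUI p q.
have : #|p| < #|p :|: q| by apply: proper_card; rewrite properE subsetUl subUset subxx.
have : #|q| < #|p :|: q| by apply: proper_card; rewrite properE subsetUr subUset subxx andbT.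
lia.
Qed.

Lemma rank_sum_submod_strict p q : p :|: q \in A -> ~~ (q \subset p) -> ~~ (p \subset q) ->
  rank_sum (p :|: q) + rank_sum (p :&: q) < rank_sum p + rank_sum q.
Proof.
move=> Apq nsqp nspq; rewrite /rank_sum -!big_split /=.
rewrite (bigD1 (p :|: q) Apq) [X in _ < X](bigD1 (p :|: q) Apq) /=.
rewrite -addSn; apply: leq_add; first exact: trunc_rank_submod_strict.
by apply: leq_sum => B _; apply: trunc_rank_submod.
Qed.

Definition realizing_rank p (dealer_in : bool) : nat := rank_sum p + (dealer_in || (p \in A)).

(* The qualification indicator alone fails submodularity exactly when p, q are
   unqualified but p :|: q is qualified; the strict inequality above pays for it. *)
Lemma realizing_rank_submod p q e1 e2 :
  realizing_rank (p :|: q) (e1 || e2) + realizing_rank (p :&: q) (e1 && e2)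
  <= realizing_rank p e1 + realizing_rank q e2.
Proof.
rewrite /realizing_rank.
have not_subU r : r \notin A -> p :|: q \in A -> ~~ (p :|: q \subset r).
  by move=> nAr Apq; apply: contra nAr => /(access_up Apq).
have strict : p \notin A -> q \notin A -> p :|: q \in A ->
    rank_sum (p :|: q) + rank_sum (p :&: q) < rank_sum p + rank_sum q.
  move=> nAp nAq Apq; apply: rank_sum_submod_strict => //.
  - by move: (not_subU p nAp Apq); rewrite subUset subxx.
  - by move: (not_subU q nAq Apq); rewrite subUset subxx andbT.
have Ip : p :&: q \in A -> p \in A by move/access_up; apply; apply: subsetIl.
have Iq : p :&: q \in A -> q \in A by move/access_up; apply; apply: subsetIr.
have Up : p \in A -> p :|: q \in A by move/access_up; apply; apply: subsetUl.
have Uq : q \in A -> p :|: q \in A by move/access_up; apply; apply: subsetUr.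
have := rank_sum_submod p q.
move: Ip Iq Up Uq strict.
case: (p \in A); case: (q \in A); case: (p :&: q \in A); case: (p :|: q \in A);
  case: e1; case: e2 => //= Ip Iq Up Uq strict; lia.
Qed.

Lemma rank_sum0 : rank_sum set0 = 0.
Proof. by rewrite /rank_sum big1 // => B _; rewrite /trunc_rank set0I cards0 min0n. Qed.

Lemma realizing_rank_mono p q (e1 e2 : bool) : p \subset q -> e1 ==> e2 ->
  realizing_rank p e1 <= realizing_rank q e2.
Proof.
move=> spq le12; apply: leq_add.
  apply: leq_sum => B _; rewrite /trunc_rank.
  have := subset_leq_card (setSI B spq); lia.
case: (boolP (p \in A)) => [/access_up/(_ spq) -> | _]; first by rewrite !orbT.
by rewrite orbF; case: e1 le12 => //= ->.
Qed.

Definition realizing_pm (Y : {set option P}) : R := INR (realizing_rank (part Y) (None \in Y)).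

Lemma realizing_pm_polymatroid : polymatroid realizing_pm.
Proof.
split; [|split; [|split]].
- rewrite /realizing_pm /realizing_rank in_set0 part0 rank_sum0.
  by case: accA => _ [_ /negbTE ->].
- by move=> X; apply: pos_INR.
- move=> X Y sXY; apply/le_INR/leP/realizing_rank_mono; first exact: partS.
  by apply/implyP => /(subsetP sXY).
- move=> X Y; rewrite /realizing_pm -!plus_INR; apply/le_INR/leP.
  by rewrite partU partI in_setU in_setI; apply: realizing_rank_submod.
Qed.

Lemma realizing_pm_realizes : realizes realizing_pm A.
Proof.
move=> X; rewrite /realizing_pm /realizing_rank part_dealerU_emb part_emb part_dealer.
rewrite in_setU (negbTE (None_notin_emb X)) /dealer in_set1 eqxx rank_sum0 !plus_INR.
by case: (X \in A); split; split => //= H; lra.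
Qed.

End CanonicalRealization.

Lemma complexities_nonempty (P : finType) (A : {set {set P}}) :
  access_structure A -> exists x, complexities A x.
Proof.
move=> accA; exists (complexity (realizing_pm A)), (realizing_pm A).
by split; [apply: realizing_pm_polymatroid | split; [apply: realizing_pm_realizes|]].
Qed.

Lemma complexities_dual_le (P : finType) (A : {set {set P}}) x :
  access_structure A -> complexities A x ->
  exists2 y, complexities (dual_as A) y & y <= x.
Proof.
move=> accA [f [f_pm [f_realizes ->]]]; exists (complexity (dual_pm f)).
  exists (dual_pm f); split; first exact: dual_pm_polymatroid.
  by split; first exact: dual_pm_realizes accA f_realizes.
exact: complexity_dual_pm accA f_pm f_realizes.
Qed.

Lemma is_inf_exists (S : R -> Prop) (m : R) :
  (exists x, S x) -> (forall x, S x -> m <= x) -> exists k, is_inf S k.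
Proof.
move=> [x0 Sx0] lbS.
have boundN : bound (fun y => S (- y)) by exists (- m) => y /lbS; lra.
have nonemptyN : exists y, S (- y) by exists (- x0); rewrite Ropp_involutive.
have [k [ubk leastk]] := completeness _ boundN nonemptyN.
exists (- k); split.
- move=> x Sx; have := ubk (- x); rewrite Ropp_involutive => /(_ Sx); lra.
- move=> m' lbm'; suff : k <= - m' by lra.
  by apply: leastk => y /lbm'; lra.
Qed.

Lemma is_inf_le (S T : R -> Prop) (k l : R) : is_inf S k -> is_inf T l ->
  (forall x, S x -> exists2 y, T y & y <= x) -> l <= k.
Proof.
move=> [_ gltS] [lbT _] domST; apply: gltS => x /domST [y /lbT]; lra.
Qed.

Theorem claim2p13 (P : finType) (A : {set {set P}}) :
  access_structure A -> connected_as A ->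
  exists k : R, is_inf (complexities A) k /\ is_inf (complexities (dual_as A)) k.
Proof.
move=> accA _; have accD := dual_access accA.
have [kA infA] := is_inf_exists (complexities_nonempty accA) (@complexities_ge0 _ A).
have [kD infD] := is_inf_exists (complexities_nonempty accD) (@complexities_ge0 _ _).
have leDA : kD <= kA by apply: is_inf_le infA infD _ => x; apply: complexities_dual_le.
have leAD : kA <= kD.
  apply: is_inf_le infD infA _ => x /(complexities_dual_le accD).
  by rewrite dual_asK.
by exists kA; split; last have -> : kA = kD by lra.
Qed.
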